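(* Consider LPC-SVRG (defined in the context) and fix an epoch $s$ and inner index $t$. Let $d_\lambda\ge 0$ be a number such that almost surely, for every worker $i$, the number of coordinates of $u_t^i$ lying outside $[-2^{b-1}\delta,(2^{b-1}-1)\delta]$, where $\delta$ is the scale factor used to quantize $u_t^i$ (i.e. $\delta_t^i$ in scheme (a), $\delta_t$ in schemes (b),(c)), is at most $d_\lambda$. Then: (i) under communication scheme (a) or (b), $$\mathbf{E}\|v_t^{s+1}-\nabla f(x_t^{s+1})\|^2\le 2L^2\Big[\frac{d\lambda^2}{4(2^{b-1}-1)^2}+d_\lambda(1-\lambda)^2+\frac{1}{NB}\Big]\mathbf{E}\|x_t^{s+1}-\tilde x^s\|^2;$$ (ii) under communication scheme (c), $$\mathbf{E}\|v_t^{s+1}-\nabla f(x_t^{s+1})\|^2\le 2L^2\Big[\frac{3d\lambda^2}{8(2^{b-1}-1)^2}+d_\lambda(1-\lambda)^2+\frac{1}{NB}\Big]\mathbf{E}\|x_t^{s+1}-\tilde x^s\|^2.$$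
   Context: Problem setting: $f_1,\dots,f_n:\mathbb{R}^d\to\mathbb{R}$ are differentiable with $\|\nabla f_i(x)-\nabla f_i(y)\|\le L\|x-y\|$; $f=\frac1n\sum_i f_i$; $h:\mathbb{R}^d\to\mathbb{R}\cup\{+\infty\}$ is proper, convex and lower semicontinuous; $P=f+h$; $\mathrm{prox}_{\eta h}(x)=\arg\min_y\{h(y)+\frac{1}{2\eta}\|y-x\|^2\}$. Quantization: for an integer $b\ge2$ and $\delta>0$, $\mathrm{dom}(\delta,b)=\{k\delta:k\in\mathbb{Z},-2^{b-1}\le k\le 2^{b-1}-1\}$; the scalar quantizer $Q_{(\delta,b)}(x)$, for $x\in[-2^{b-1}\delta,(2^{b-1}-1)\delta]$ with $z$ the largest grid point $\le x$, equals $z$ with probability $\frac{z+\delta-x}{\delta}$ and $z+\delta$ otherwise; for $x$ outside this interval it equals the nearest grid point. On vectors it acts coordinatewise with independent randomness. If $\delta=0$ (which only occurs when the vector to be quantized is $0$) we set the output to $0$. LPC-SVRG with $N$ workers, parameters $S,m,B\in\mathbb{N}$, $\eta>0$, $\lambda\in(0,1]$, $b\ge 2$, starting point $\tilde x^0=x^0$: for $s=0,\dots,S-1$, set $x_0^{s+1}=\tilde x^s$ and compute $\nabla f(\tilde x^s)$ exactly; for $t=0,\dots,m-1$: each worker $i\in\{1,\dots,N\}$ draws $B$ indices independently and uniformly from $\{1,\dots,n\}$ (with replacement; independent across workers and iterations), forming the multiset $I_t^i$, and computes $u_t^i=\frac1B\sum_{a\in I_t^i}[\nabla f_a(x_t^{s+1})-\nabla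 f_a(\tilde x^s)]$; let $\delta_t^i=\frac{\lambda\|u_t^i\|_\infty}{2^{b-1}-1}$. Then $\tilde u_t$ is formed by one of three schemes: (a) $\tilde u_t=\frac1N\sum_i Q_{(\delta_t^i,b)}(u_t^i)$; (b) with $\delta_t=\max_i\delta_t^i$, $\tilde u_t=\frac1N\sum_i Q_{(\delta_t,b)}(u_t^i)$; (c) with $\delta_t=\max_i\delta_t^i$ and $\tilde u_t^i=Q_{(\delta_t,b)}(u_t^i)$, $\tilde u_t=Q_{(\delta_t,b)}\big(\frac1N\sum_i\tilde u_t^i\big)$ (with fresh independent rounding). All quantization roundings are independent of each other given the sampled indices. Then $v_t^{s+1}=\tilde u_t+\nabla f(\tilde x^s)$ and $x_{t+1}^{s+1}=\mathrm{prox}_{\eta h}(x_t^{s+1}-\eta v_t^{s+1})$. After the inner loop, $\tilde x^{s+1}=x_m^{s+1}$. The output $x_{out}$ is chosen uniformly at random from $\{x_t^{s+1}: 0\le t\le m-1,\ 0\le s\le S-1\}$. *)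

(* Vectors of R^d are modelled as [nat -> R],
   only the coordinates 0..d-1 are ever inspected (norms, inner products,
   quantization). Randomness is modelled by finite discrete distributions
   (lists of (probability, outcome) pairs); all randomness in LPC-SVRG is finite. *)
From Stdlib Require Import Reals Lra List.
Import ListNotations.
Open Scope R_scope.

Definition vec := nat -> R.
Definition vzero : vec := fun _ => 0.
Definition vadd (x y : vec) : vec := fun j => x j + y j.
Definition vsub (x y : vec) : vec := fun j => x j - y j.
Definition vscal (a : R) (x : vec) : vec := fun j => a * x j.

Fixpoint sumR (m : nat) (F : nat -> R) : R :=
  match m with O => 0 | S k => sumR k F + F k end.

Definition inner (d : nat) (x y : vec) : R := sumR d (fun j => x j * y j).
Definition sqnorm (d : nat) (x : vec) : R := sumR d (fun j => x j ^ 2).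
Definition norm (d : nat) (x : vec) : R := sqrt (sqnorm d x).
Fixpoint infnorm (d : nat) (x : vec) : R :=
  match d with O => 0 | S k => Rmax (infnorm k x) (Rabs (x k)) end.

Definition dist (A : Type) := list (R * A).
Definition dret {A} (a : A) : dist A := [(1, a)].
Fixpoint dbind {A B} (m : dist A) (k : A -> dist B) : dist B :=
  match m with
  | [] => []
  | (p, a) :: m' => map (fun qb => (p * fst qb, snd qb)) (k a) ++ dbind m' k
  end.
Fixpoint expect {A} (m : dist A) (F : A -> R) : R :=
  match m with [] => 0 | (p, a) :: m' => p * F a + expect m' F end.
Definition almost_surely {A} (m : dist A) (P : A -> Prop) : Prop :=
  forall p a, In (p, a) m -> 0 < p -> P a.

(* uniform index in {0,...,n-1} (the paper's {1,...,n}, shifted) *)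
Definition unif (n : nat) : dist nat := map (fun i => (/ INR n, i)) (seq 0 n).
Fixpoint sampleB (B n : nat) : dist (list nat) :=
  match B with
  | O => dret []
  | S B' => dbind (unif n) (fun a => dbind (sampleB B' n) (fun I => dret (a :: I)))
  end.
Fixpoint sample_workers (N B n : nat) : dist (list (list nat)) :=
  match N with
  | O => dret []
  | S N' => dbind (sampleB B n) (fun I =>
              dbind (sample_workers N' B n) (fun Is => dret (I :: Is)))
  end.

Definition qlo (delta : R) (b : nat) : R := - (2 ^ (b - 1)%nat) * delta.
Definition qhi (delta : R) (b : nat) : R := (2 ^ (b - 1)%nat - 1) * delta.

Definition Qsc (delta : R) (b : nat) (x : R) : dist R :=
  if Req_EM_T delta 0 then dret 0 else
  if Rlt_dec x (qlo delta b) then dret (qlo delta b) else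
  if Rlt_dec (qhi delta b) x then dret (qhi delta b) else
  let z := delta * IZR (Int_part (x / delta)) in   (* largest grid point <= x *)
  [((z + delta - x) / delta, z); ((x - z) / delta, z + delta)].

Fixpoint Qvec_aux (delta : R) (b : nat) (x : vec) (k : nat) : dist vec :=
  match k with
  | O => dret vzero
  | S k' => dbind (Qvec_aux delta b x k') (fun y =>
              dbind (Qsc delta b (x k')) (fun z =>
                dret (fun j => if Nat.eqb j k' then z else y j)))
  end.
Definition Qvec (delta : R) (b d : nat) (x : vec) : dist vec := Qvec_aux delta b x d.

Fixpoint Qlist (b d : nat) (ds : list R) (us : list vec) : dist (list vec) :=
  match ds, us with
  | delta :: ds', u :: us' =>
      dbind (Qvec delta b d u) (fun q => dbind (Qlist b d ds' us') (fun qs => dret (q :: qs)))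
  | _, _ => dret []
  end.

Fixpoint count_out (delta : R) (b : nat) (u : vec) (k : nat) : nat :=
  match k with
  | O => O
  | S k' => (count_out delta b u k' +
             (if Rlt_dec (u k') (qlo delta b) then 1
              else if Rlt_dec (qhi delta b) (u k') then 1 else 0))%nat
  end.

Inductive scheme := SchA | SchB | SchC.

Record StepOut := mkStepOut {
  so_us : list vec;   (* u_t^i, i = 1..N *)
  so_ds : list R;     (* scale factor used to quantize u_t^i *)
  so_v  : vec         (* v_t^{s+1} *)
}.

Definition gradf (n : nat) (g : nat -> vec -> vec) (x : vec) : vec :=
  fun j => / INR n * sumR n (fun a => g a x j).

Definition avg (N : nat) (l : list vec) : vec :=
  fun j => / INR N * fold_right (fun v acc => v j + acc) 0 l.

Definition uvec (B : nat) (g : nat -> vec -> vec) (x xt : vec) (I : list nat) : vec :=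
  fun j => / INR B * fold_right (fun a acc => g a x j - g a xt j + acc) 0 I.

Definition scale (b : nat) (lam : R) (d : nat) (u : vec) : R :=
  lam * infnorm d u / (2 ^ (b - 1)%nat - 1).

(* one inner iteration at current point x with snapshot xt *)
Definition step (sc : scheme) (n N B b d : nat) (lam : R)
    (g : nat -> vec -> vec) (x xt : vec) : dist StepOut :=
  dbind (sample_workers N B n) (fun Is =>
    let us := map (uvec B g x xt) Is in
    let dis := map (scale b lam d) us in
    let dt := fold_right Rmax 0 dis in
    match sc with
    | SchA => dbind (Qlist b d dis us) (fun qs =>
                dret (mkStepOut us dis (vadd (avg N qs) (gradf n g xt))))
    | SchB => let ds := map (fun _ => dt) us in
              dbind (Qlist b d ds us) (fun qs =>
                dret (mkStepOut us ds (vadd (avg N qs) (gradf n g xt))))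
    | SchC => let ds := map (fun _ => dt) us in
              dbind (Qlist b d ds us) (fun qs =>
                dbind (Qvec dt b d (avg N qs)) (fun w =>
                  dret (mkStepOut us ds (vadd w (gradf n g xt)))))
    end).

(* distribution of x_k^{s+1} given x_0^{s+1} = x and snapshot xt *)
Fixpoint inner_loop (sc : scheme) (n N B b d : nat) (lam eta : R)
    (g : nat -> vec -> vec) (prox : vec -> vec) (k : nat) (x xt : vec) : dist vec :=
  match k with
  | O => dret x
  | S k' => dbind (inner_loop sc n N B b d lam eta g prox k' x xt) (fun y =>
              dbind (step sc n N B b d lam g y xt) (fun o =>
                dret (prox (fun j => y j - eta * so_v o j))))
  end.

(* distribution of the snapshot \tilde x^s *)
Fixpoint snapshots (sc : scheme) (n N B b d m : nat) (lam eta : R)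
    (g : nat -> vec -> vec) (prox : vec -> vec) (s : nat) (x0 : vec) : dist vec :=
  match s with
  | O => dret x0
  | S s' => dbind (snapshots sc n N B b d m lam eta g prox s' x0) (fun xt =>
              inner_loop sc n N B b d lam eta g prox m xt xt)
  end.

(* joint distribution of (x_t^{s+1}, \tilde x^s) *)
Definition history (sc : scheme) (n N B b d m : nat) (lam eta : R)
    (g : nat -> vec -> vec) (prox : vec -> vec) (s t : nat) (x0 : vec)
    : dist (vec * vec) :=
  dbind (snapshots sc n N B b d m lam eta g prox s x0) (fun xt =>
    dbind (inner_loop sc n N B b d lam eta g prox t xt xt) (fun x => dret (x, xt))).

(* joint distribution of (x_t^{s+1}, \tilde x^s, outcome of iteration t) *)
Definition joint (sc : scheme) (n N B b d m : nat) (lam eta : R)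
    (g : nat -> vec -> vec) (prox : vec -> vec) (s t : nat) (x0 : vec)
    : dist (vec * vec * StepOut) :=
  dbind (history sc n N B b d m lam eta g prox s t x0) (fun p =>
    dbind (step sc n N B b d lam g (fst p) (snd p)) (fun o => dret (fst p, snd p, o))).

Definition has_gradient (d : nat) (F : vec -> R) (G : vec -> vec) : Prop :=
  forall x eps, 0 < eps -> exists del, 0 < del /\
    forall y, norm d (vsub y x) < del ->
      Rabs (F y - F x - inner d (G x) (vsub y x)) <= eps * norm d (vsub y x).

(* extended-real valued h : R^d -> R u {+oo}; None = +oo *)
Definition ext_le (a c : option R) : Prop :=
  match a, c with
  | _, None => True
  | None, Some _ => False
  | Some a, Some c => a <= c
  end.
Definition ext_addR (a : option R) (r : R) : option R :=
  match a with None => None | Some a => Some (a + r) end.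

Definition proper (h : vec -> option R) : Prop := exists x r, h x = Some r.
Definition convex_ext (h : vec -> option R) : Prop :=
  forall x y a c th, h x = Some a -> h y = Some c -> 0 <= th <= 1 ->
    exists e, h (vadd (vscal th x) (vscal (1 - th) y)) = Some e /\
              e <= th * a + (1 - th) * c.
Definition lsc (d : nat) (h : vec -> option R) : Prop :=
  forall x r, ext_le (Some r) (h x) -> h x <> Some r ->   (* r < h x *)
    exists del, 0 < del /\ forall y, norm d (vsub y x) < del ->
      ext_le (Some r) (h y) /\ h y <> Some r.
Definition is_prox (d : nat) (eta : R) (h : vec -> option R) (prox : vec -> vec) : Prop :=
  forall x y, ext_le (ext_addR (h (prox x)) (sqnorm d (vsub (prox x) x) / (2 * eta)))
                     (ext_addR (h y) (sqnorm d (vsub y x) / (2 * eta))).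

(* Conditionally on (x, xt) = (x_t^{s+1}, xt^s), put K := L^2 ||x - xt||^2 and split
     v_t - grad f(x) = (Q - ubar) + (ubar - (grad f(x) - grad f(xt))),
   where ubar averages the N workers' minibatch vectors u^i and Q is the quantized average.
   - Sampling: ubar averages N*B i.i.d. centred draws, so E||ubar - mean||^2 <= K/(NB).
   - Quantization: in range, stochastic rounding is unbiased with variance <= delta^2/4;
     a clipped coordinate has bias <= (1 - lam)||u||_inf; the workers' errors are
     independent, so variances add, and at most d_lambda coordinates per worker are
     clipped.  Scheme (c) requantizes the in-range average: another delta^2/4, hence 3/8.
   - Every scale factor is at most lam sqrt K / (2^(b-1) - 1), which yields the bound of
     one step (step_error_le); it then integrates over the history (joint_error_le). *)

From Pilot Require Import Defs.
From Stdlib Require Import Reals List Lra Lia ZArith.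
Import ListNotations.
Open Scope R_scope.

(** * Finite distributions *)

Definition mass {A} (m : Defs.dist A) : R := expect m (fun _ => 1).
Definition weights_nonneg {A} (m : Defs.dist A) : Prop := forall p a, In (p, a) m -> 0 <= p.
Definition is_distr {A} (m : Defs.dist A) : Prop := weights_nonneg m /\ mass m = 1.

Lemma expect_app {A} (l1 l2 : Defs.dist A) F :
  expect (l1 ++ l2) F = expect l1 F + expect l2 F.
Proof. induction l1 as [|[p a] l IH]; simpl; [lra|rewrite IH; lra]. Qed.

Lemma expect_reweight {A} (l : Defs.dist A) p F :
  expect (map (fun qb => (p * fst qb, snd qb)) l) F = p * expect l F.
Proof. induction l as [|[q a] l IH]; simpl; [lra|rewrite IH; lra]. Qed.

Lemma expect_bind {A C} (m : Defs.dist A) (k : A -> Defs.dist C) F :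
  expect (dbind m k) F = expect m (fun a => expect (k a) F).
Proof.
  induction m as [|[p a] m IH]; simpl; auto.
  rewrite expect_app, expect_reweight, IH; lra.
Qed.

Lemma expect_ret {A} (a : A) F : expect (dret a) F = F a.
Proof. simpl; lra. Qed.

Lemma expect_bind_ret {A C} (m : Defs.dist A) (f : A -> C) F :
  expect (dbind m (fun a => dret (f a))) F = expect m (fun a => F (f a)).
Proof. induction m as [|[p a] m IH]; simpl; [lra|rewrite IH; lra]. Qed.

Lemma expect_ext {A} (m : Defs.dist A) F G :
  (forall p a, In (p, a) m -> F a = G a) -> expect m F = expect m G.
Proof.
  induction m as [|[p a] m IH]; simpl; intros H; auto.
  rewrite (H p a (or_introl eq_refl)), IH; auto.
  intros; eapply H; right; eauto.
Qed.

Lemma expect_plus {A} (m : Defs.dist A) F G :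
  expect m (fun a => F a + G a) = expect m F + expect m G.
Proof. induction m as [|[p a] m IH]; simpl; [lra|rewrite IH; lra]. Qed.

Lemma expect_scal {A} (m : Defs.dist A) c F :
  expect m (fun a => c * F a) = c * expect m F.
Proof. induction m as [|[p a] m IH]; simpl; [lra|rewrite IH; lra]. Qed.

Lemma expect_const {A} (m : Defs.dist A) c : expect m (fun _ => c) = c * mass m.
Proof. unfold mass; induction m as [|[p a] m IH]; simpl; [lra|rewrite IH; lra]. Qed.

Lemma expect_shift_sq {A} (m : Defs.dist A) c Y :
  expect m (fun a => (c + Y a) ^ 2)
  = c ^ 2 * mass m + 2 * c * expect m Y + expect m (fun a => Y a ^ 2).
Proof.
  rewrite (expect_ext m _ (fun a => c ^ 2 + ((2 * c) * Y a + Y a ^ 2))) by (intros; ring).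
  rewrite !expect_plus, expect_const, expect_scal. ring.
Qed.

Lemma is_distr_ret {A} (a : A) : is_distr (dret a).
Proof. split; [intros p b [E|[]]; inversion E; lra|unfold mass; simpl; lra]. Qed.

Lemma In_bind_elim {A C} (m : Defs.dist A) (k : A -> Defs.dist C) p c :
  In (p, c) (dbind m k) -> exists q a r, In (q, a) m /\ In (r, c) (k a) /\ p = q * r.
Proof.
  induction m as [|[q a] m IH]; simpl; [tauto|].
  intros H; apply in_app_or in H as [H|H].
  - apply in_map_iff in H as [[r c'] [E Hin]]; simpl in E; inversion E; subst.
    exists q, a, r; auto.
  - destruct (IH H) as (q' & a' & r & H1 & H2 & H3); exists q', a', r; auto.
Qed.

Lemma In_bind_intro {A C} (m : Defs.dist A) (k : A -> Defs.dist C) q a r c :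
  In (q, a) m -> In (r, c) (k a) -> In (q * r, c) (dbind m k).
Proof.
  induction m as [|[q' a'] m IH]; simpl; [tauto|].
  intros [E|H] H2; apply in_or_app.
  - inversion E; subst. left. apply (in_map (fun qb => (q * fst qb, snd qb)) _ (r, c)); auto.
  - right; auto.
Qed.

Lemma is_distr_bind {A C} (m : Defs.dist A) (k : A -> Defs.dist C) :
  is_distr m -> (forall a, is_distr (k a)) -> is_distr (dbind m k).
Proof.
  intros [Hm Mm] Hk. split.
  - intros p c Hin. apply In_bind_elim in Hin as (q & a & r & Ha & Hc & ->).
    apply Rmult_le_pos; [eapply Hm|eapply (proj1 (Hk a))]; eauto.
  - unfold mass; rewrite expect_bind.
    rewrite (expect_ext m _ (fun _ => 1)); auto. intros; apply (proj2 (Hk _)).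
Qed.

Lemma as_ret {A} (a : A) (P : A -> Prop) : P a -> almost_surely (dret a) P.
Proof. intros H p c [E|[]] _; inversion E; subst; auto. Qed.

Lemma as_bind_elim {A C} (m : Defs.dist A) (k : A -> Defs.dist C) (P : C -> Prop) :
  almost_surely (dbind m k) P -> almost_surely m (fun a => almost_surely (k a) P).
Proof.
  intros H q a Ha Hq r c Hc Hr. apply (H (q * r)); [apply In_bind_intro with a; auto|].
  apply Rmult_lt_0_compat; auto.
Qed.

Lemma as_bind_intro {A C} (m : Defs.dist A) (k : A -> Defs.dist C) (P : C -> Prop) :
  is_distr m -> (forall a, is_distr (k a)) ->
  almost_surely m (fun a => almost_surely (k a) P) -> almost_surely (dbind m k) P.
Proof.
  intros [Hm _] Hk H p c Hin Hp. apply In_bind_elim in Hin as (q & a & r & Ha & Hc & ->).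
  assert (0 <= q) by (eapply Hm; eauto). assert (0 <= r) by (eapply (proj1 (Hk a)); eauto).
  assert (q <> 0) by (intros ->; lra). assert (r <> 0) by (intros ->; lra).
  apply (H q a Ha ltac:(lra) r c Hc ltac:(lra)).
Qed.

Lemma as_bind_all {A C} (m : Defs.dist A) (k : A -> Defs.dist C) (P : C -> Prop) :
  is_distr m -> (forall a, is_distr (k a)) -> (forall a, almost_surely (k a) P) ->
  almost_surely (dbind m k) P.
Proof. intros Hm Hk H. apply as_bind_intro; auto. intros p a _ _. apply H. Qed.

Lemma as_mono {A} (m : Defs.dist A) (P Q : A -> Prop) :
  almost_surely m P -> (forall a, P a -> Q a) -> almost_surely m Q.
Proof. intros H HPQ p a Ha Hp; auto. eapply HPQ, H; eauto. Qed.

Lemma as_and {A} (m : Defs.dist A) (P Q : A -> Prop) :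
  almost_surely m P -> almost_surely m Q -> almost_surely m (fun a => P a /\ Q a).
Proof. intros H1 H2 p a Ha Hp; split; [eapply H1|eapply H2]; eauto. Qed.

(* A distribution has some outcome of positive weight. *)
Lemma as_witness {A} (m : Defs.dist A) (P : A -> Prop) :
  is_distr m -> almost_surely m P -> exists a, P a.
Proof.
  intros [Hn Hm] H. unfold mass in Hm.
  induction m as [|[p a] m IH]; simpl in Hm; [lra|].
  assert (0 <= p) by (eapply Hn; left; eauto).
  destruct (Req_dec p 0) as [->|Hp].
  - apply IH; [intros q c Hq; eapply Hn; right; eauto|lra|].
    intros q c Hq; apply H; right; auto.
  - exists a. apply (H p a (or_introl eq_refl)). lra.
Qed.

Lemma expect_le_as {A} (m : Defs.dist A) F G : weights_nonneg m ->
  almost_surely m (fun a => F a <= G a) -> expect m F <= expect m G.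
Proof.
  induction m as [|[p a] m IH]; simpl; intros Hn H; [lra|].
  assert (Hp : 0 <= p) by (eapply Hn; left; eauto).
  assert (expect m F <= expect m G).
  { apply IH; [intros q c Hq; eapply Hn; right; eauto|].
    intros q c Hq; apply H; right; auto. }
  destruct (Req_dec p 0) as [->|Hp0]; [lra|].
  assert (F a <= G a) by (apply (H p a (or_introl eq_refl)); lra). nra.
Qed.

Lemma expect_ext_as {A} (m : Defs.dist A) F G : weights_nonneg m ->
  almost_surely m (fun a => F a = G a) -> expect m F = expect m G.
Proof.
  intros Hn H. apply Rle_antisym; apply expect_le_as; auto.
  - apply (as_mono m _ _ H (fun a E => Req_le _ _ E)).
  - apply (as_mono m _ _ H (fun a E => Req_le_sym _ _ E)).
Qed.

Lemma as_ret_inv {A} (a : A) (P : A -> Prop) : almost_surely (dret a) P -> P a.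
Proof. intros H. apply (H 1 a (or_introl eq_refl)). lra. Qed.

(** * Finite sums *)

Lemma sumR_plus k F G : sumR k (fun j => F j + G j) = sumR k F + sumR k G.
Proof. induction k; simpl; [lra|rewrite IHk; lra]. Qed.
Lemma sumR_scal k c F : sumR k (fun j => c * F j) = c * sumR k F.
Proof. induction k; simpl; [lra|rewrite IHk; lra]. Qed.
Lemma sumR_const k c : sumR k (fun _ => c) = INR k * c.
Proof. induction k; simpl sumR; [simpl; lra|rewrite IHk, S_INR; ring]. Qed.
Lemma sumR_ext k F G : (forall j, (j < k)%nat -> F j = G j) -> sumR k F = sumR k G.
Proof. induction k; simpl; intros H; auto. rewrite IHk, H; auto; intros; apply H; lia. Qed.
Lemma sumR_le k F G : (forall j, (j < k)%nat -> F j <= G j) -> sumR k F <= sumR k G.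
Proof.
  induction k; simpl; intros H; [lra|].
  assert (F k <= G k) by (apply H; lia).
  assert (sumR k F <= sumR k G) by (apply IHk; intros; apply H; lia). lra.
Qed.
Lemma sumR_nonneg k F : (forall j, (j < k)%nat -> 0 <= F j) -> 0 <= sumR k F.
Proof. intros H. rewrite <- (Rmult_0_r (INR k)), <- sumR_const. apply sumR_le; auto. Qed.
Lemma sumR_swap k l (F : nat -> nat -> R) :
  sumR k (fun j => sumR l (fun a => F j a)) = sumR l (fun a => sumR k (fun j => F j a)).
Proof.
  induction k; simpl; [rewrite sumR_const; ring|].
  rewrite IHk, <- sumR_plus; auto.
Qed.
Lemma sumR_shift k F : sumR (S k) F = F O + sumR k (fun i => F (S i)).
Proof. induction k; simpl; [lra|]. simpl in IHk. rewrite IHk. lra. Qed.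

Lemma expect_sumR {A} (m : Defs.dist A) k F :
  expect m (fun a => sumR k (fun j => F j a)) = sumR k (fun j => expect m (F j)).
Proof. induction k; simpl; [rewrite expect_const; lra|rewrite expect_plus, IHk; auto]. Qed.

Lemma expect_sqnorm {A} (m : Defs.dist A) d (F : A -> vec) :
  expect m (fun a => sqnorm d (F a)) = sumR d (fun j => expect m (fun a => F a j ^ 2)).
Proof. apply (expect_sumR m d (fun j a => F a j ^ 2)). Qed.

Lemma sqnorm_nonneg d v : 0 <= sqnorm d v.
Proof. apply sumR_nonneg. intros; apply pow2_ge_0. Qed.

Definition sumL {A} (F : A -> R) (l : list A) : R := fold_right (fun a acc => F a + acc) 0 l.

Lemma sumL_ext {A} (F G : A -> R) l : (forall a, In a l -> F a = G a) -> sumL F l = sumL G l.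
Proof. induction l; simpl; intros H; auto. rewrite H, IHl; auto. Qed.
Lemma sumL_le {A} (F G : A -> R) l : (forall a, In a l -> F a <= G a) -> sumL F l <= sumL G l.
Proof.
  induction l; simpl; intros H; [lra|]. pose proof (H a (or_introl eq_refl)).
  assert (sumL F l <= sumL G l) by (apply IHl; auto). lra.
Qed.
Lemma sumL_const {A} c (l : list A) : sumL (fun _ => c) l = INR (length l) * c.
Proof. induction l; simpl sumL; simpl length; [simpl; ring|rewrite IHl, S_INR; ring]. Qed.
Lemma sumL_plus {A} (F G : A -> R) l : sumL (fun a => F a + G a) l = sumL F l + sumL G l.
Proof. induction l; simpl; [ring|rewrite IHl; ring]. Qed.
Lemma sumL_scal {A} (F : A -> R) c l : sumL (fun a => c * F a) l = c * sumL F l.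
Proof. induction l; simpl; [ring|rewrite IHl; ring]. Qed.
Lemma sumL_nonneg {A} (F : A -> R) l : (forall a, In a l -> 0 <= F a) -> 0 <= sumL F l.
Proof. intros H. rewrite <- (Rmult_0_r (INR (length l))), <- sumL_const. apply sumL_le; auto. Qed.
Lemma sumR_sumL {A} k (F : nat -> A -> R) l :
  sumR k (fun j => sumL (F j) l) = sumL (fun a => sumR k (fun j => F j a)) l.
Proof.
  induction l; simpl; [induction k; simpl; [ring|rewrite IHk; ring]|].
  rewrite sumR_plus, IHl. auto.
Qed.
Lemma sumL_map {A} (f : A -> vec) j l :
  fold_right (fun v acc => v j + acc) 0 (map f l) = sumL (fun a => f a j) l.
Proof. induction l; simpl; auto. rewrite IHl; auto. Qed.

Lemma sumL_sq_le {A} (F : A -> R) l :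
  (sumL F l) ^ 2 <= INR (length l) * sumL (fun a => F a ^ 2) l.
Proof.
  induction l as [|a l IH]; simpl sumL; simpl length; [simpl; lra|].
  rewrite S_INR.
  set (S := sumL F l) in *. set (Q := sumL (fun a => F a ^ 2) l) in *.
  set (k := INR (length l)) in *. set (x := F a).
  assert (0 <= k) by apply pos_INR.
  assert (0 <= Q) by (apply sumL_nonneg; intros; apply pow2_ge_0).
  assert (2 * x * S <= k * x ^ 2 + Q).
  { destruct (Req_dec k 0) as [Hk0|Hk0].
    - rewrite Hk0 in IH. assert (S = 0) by nra. rewrite H1. nra.
    - apply (Rmult_le_reg_l k); [lra|].
      assert (0 <= (k * x - S) ^ 2) by apply pow2_ge_0. nra. }
  change (x * (x * 1) + sumL (fun a0 => F a0 * (F a0 * 1)) l) with (x ^ 2 + Q). lra.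
Qed.

Lemma div_INR_le a k : 0 <= a -> (0 < k)%nat -> a / INR k <= a.
Proof.
  intros Ha Hk. assert (1 <= INR k) by (apply (le_INR 1); lia).
  unfold Rdiv. rewrite <- (Rmult_1_r a) at 2. apply Rmult_le_compat_l; auto.
  rewrite <- Rinv_1. apply Rinv_le_contravar; lra.
Qed.

Lemma sq_split a m c : (a - c) ^ 2 <= 2 * (a - m) ^ 2 + 2 * (m - c) ^ 2.
Proof. assert (0 <= (a - 2 * m + c) ^ 2) by apply pow2_ge_0. nra. Qed.

(** * The scalar stochastic quantizer [Qsc] *)

(* Number of positive quantization levels, 2^(b-1) - 1. *)
Definition levels (b : nat) : R := 2 ^ (b - 1) - 1.

Lemma levels_ge1 b : (2 <= b)%nat -> 1 <= levels b.
Proof.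
  intros Hb. unfold levels. replace (b - 1)%nat with (S (b - 2)) by lia. simpl.
  pose proof (pow_R1_Rle 2 (b - 2) ltac:(lra)). lra.
Qed.

Definition out_ind (dl : R) (b : nat) (x : R) : R :=
  if Rlt_dec x (qlo dl b) then 1 else if Rlt_dec (qhi dl b) x then 1 else 0.

Lemma out_ind_01 dl b x : out_ind dl b x = 0 \/ out_ind dl b x = 1.
Proof. unfold out_ind; destruct (Rlt_dec _ _); auto; destruct (Rlt_dec _ _); auto. Qed.

Lemma count_out_sum dl b u k : INR (count_out dl b u k) = sumR k (fun j => out_ind dl b (u j)).
Proof.
  induction k; simpl count_out; simpl sumR; [reflexivity|].
  rewrite plus_INR, IHk. f_equal. unfold out_ind.
  destruct (Rlt_dec _ _); [reflexivity|]. destruct (Rlt_dec _ _); reflexivity.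
Qed.

(* The endpoints of the range are grid points: qlo = dl*(-P), qhi = dl*(P-1), P = 2^(b-1). *)
Definition half_levels (b : nat) : Z := (2 ^ Z.of_nat (b - 1))%Z.

Lemma half_levels_eq b : 2 ^ (b - 1) = IZR (half_levels b).
Proof. unfold half_levels. rewrite <- pow_IZR. reflexivity. Qed.

Lemma qlo_eq dl b : qlo dl b = dl * IZR (- half_levels b).
Proof. unfold qlo. rewrite half_levels_eq, opp_IZR. ring. Qed.
Lemma qhi_eq dl b : qhi dl b = dl * IZR (half_levels b - 1).
Proof. unfold qhi. rewrite half_levels_eq, minus_IZR. ring. Qed.

(* Scale 0 (only used for u = 0) returns 0. *)
Lemma Qsc_zero b x : Qsc 0 b x = dret 0.
Proof. unfold Qsc. destruct (Req_EM_T 0 0); [auto|lra]. Qed.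

Lemma Qsc_mid dl b x : dl <> 0 -> ~ x < qlo dl b -> ~ qhi dl b < x ->
  let z := dl * IZR (Int_part (x / dl)) in
  Qsc dl b x = [((z + dl - x) / dl, z); ((x - z) / dl, z + dl)].
Proof.
  intros H1 H2 H3. unfold Qsc.
  destruct (Req_EM_T dl 0); [contradiction|].
  destruct (Rlt_dec x (qlo dl b)); [contradiction|].
  destruct (Rlt_dec (qhi dl b) x); [contradiction|]. reflexivity.
Qed.

Lemma floor_grid_bounds dl x : 0 < dl ->
  dl * IZR (Int_part (x / dl)) <= x < dl * IZR (Int_part (x / dl)) + dl.
Proof.
  intros Hd. destruct (base_Int_part (x / dl)) as [H1 H2].
  assert (x = dl * (x / dl)) by (field; lra). split; nra.
Qed.

Lemma Qsc_distr dl b x : 0 <= dl -> is_distr (Qsc dl b x).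
Proof.
  intros Hd. destruct (Req_dec dl 0) as [->|Hd0]; [rewrite Qsc_zero; apply is_distr_ret|].
  unfold Qsc. destruct (Req_EM_T dl 0); [contradiction|].
  destruct (Rlt_dec x (qlo dl b)); [apply is_distr_ret|].
  destruct (Rlt_dec (qhi dl b) x); [apply is_distr_ret|].
  cbv zeta. pose proof (floor_grid_bounds dl x ltac:(lra)) as [I1 I2].
  set (z := dl * IZR (Int_part (x / dl))) in *. split.
  - intros p a [E|[E|[]]]; inversion E; subst; unfold Rdiv;
      apply Rmult_le_pos; try lra; left; apply Rinv_0_lt_compat; lra.
  - unfold mass; simpl. field. auto.
Qed.

Lemma floor_index_range dl b x : 0 < dl -> qlo dl b <= x <= qhi dl b ->
  let k := Int_part (x / dl) in
  (- half_levels b <= k)%Z /\ (k <= half_levels b - 1)%Z /\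
  (dl * IZR k < x -> (k + 1 <= half_levels b - 1)%Z).
Proof.
  intros Hd Hx k. rewrite qlo_eq, qhi_eq in Hx.
  pose proof (base_Int_part (x / dl)) as [K1 K2]. fold k in K1, K2.
  assert (Ex : dl * (x / dl) = x) by (field; lra).
  assert (A1 : IZR (- half_levels b) <= x / dl)
    by (apply (Rmult_le_reg_l dl); [lra|]; rewrite Ex; lra).
  assert (A2 : x / dl <= IZR (half_levels b - 1))
    by (apply (Rmult_le_reg_l dl); [lra|]; rewrite Ex; lra).
  split; [|split].
  - assert (IZR (- half_levels b - 1) < IZR k) by (rewrite minus_IZR; lra).
    apply lt_IZR in H. lia.
  - apply le_IZR. lra.
  - intros Hk. assert (IZR k < x / dl) by (apply (Rmult_lt_reg_l dl); [lra|]; rewrite Ex; lra).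
    assert (IZR k < IZR (half_levels b - 1)) as H' by lra. apply lt_IZR in H'. lia.
Qed.

Lemma Qsc_support dl b x : 0 <= dl -> (2 <= b)%nat ->
  almost_surely (Qsc dl b x) (fun q => qlo dl b <= q <= qhi dl b).
Proof.
  intros Hd Hb p q Hin Hp.
  assert (HP : 2 <= IZR (half_levels b))
    by (rewrite <- half_levels_eq; pose proof (levels_ge1 b Hb); unfold levels in *; lra).
  assert (Hlh : qlo dl b <= qhi dl b) by (rewrite qlo_eq, qhi_eq, opp_IZR, minus_IZR; nra).
  destruct (Req_dec dl 0) as [->|Hd0].
  { rewrite Qsc_zero in Hin. destruct Hin as [E|[]]; inversion E; subst.
    unfold qlo, qhi; lra. }
  unfold Qsc in Hin. destruct (Req_EM_T dl 0); [contradiction|].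
  destruct (Rlt_dec x (qlo dl b)).
  { destruct Hin as [E|[]]; inversion E; subst. lra. }
  destruct (Rlt_dec (qhi dl b) x).
  { destruct Hin as [E|[]]; inversion E; subst. lra. }
  cbv zeta in Hin. assert (Hdp : 0 < dl) by lra.
  destruct (floor_index_range dl b x Hdp ltac:(lra)) as (K1 & K2 & K3).
  set (k := Int_part (x / dl)) in *.
  apply IZR_le in K1. apply IZR_le in K2.
  destruct Hin as [E|[E|[]]]; inversion E; subst; rewrite qlo_eq, qhi_eq.
  - split; nra.
  - assert (Hxz : dl * IZR k < x).
    { destruct (Rle_dec x (dl * IZR k)) as [Hle|]; [|lra].
      assert ((x - dl * IZR k) / dl <= 0); [|lra].
      unfold Rdiv. assert (0 < / dl) by (apply Rinv_0_lt_compat; lra). nra. }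
    apply K3, IZR_le in Hxz. rewrite plus_IZR in Hxz.
    split; nra.
Qed.

(* Inside the range, rounding is unbiased with variance (z + dl - x)(x - z) <= dl^2/4. *)
Lemma Qsc_mid_moments dl b x : 0 < dl -> ~ x < qlo dl b -> ~ qhi dl b < x ->
  expect (Qsc dl b x) (fun q => q - x) = 0 /\
  expect (Qsc dl b x) (fun q => (q - x) ^ 2) <= dl ^ 2 / 4.
Proof.
  intros Hd H1 H2. rewrite Qsc_mid by lra. cbv zeta. simpl.
  pose proof (floor_grid_bounds dl x Hd).
  set (z := dl * IZR (Int_part (x / dl))) in *. split; [field; lra|].
  replace ((z + dl - x) / dl * ((z - x) * ((z - x) * 1))
           + ((x - z) / dl * ((z + dl - x) * ((z + dl - x) * 1)) + 0))
    with ((z + dl - x) * (x - z)) by (field; lra).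
  assert (0 <= (dl / 2 - (x - z)) ^ 2) by apply pow2_ge_0. lra.
Qed.

Lemma Qsc_bias_variance dl b x lam A : 0 <= dl -> (2 <= b)%nat -> 0 < lam <= 1 ->
  lam * A <= levels b * dl -> Rabs x <= A ->
  (expect (Qsc dl b x) (fun q => q - x)) ^ 2 <= out_ind dl b x * (1 - lam) ^ 2 * A ^ 2 /\
  expect (Qsc dl b x) (fun q => (q - x) ^ 2) - (expect (Qsc dl b x) (fun q => q - x)) ^ 2
    <= dl ^ 2 / 4.
Proof.
  intros Hd Hb Hl HA Hx. pose proof (levels_ge1 b Hb) as Hc. unfold levels in *.
  assert (Hx1 : - A <= x <= A) by (unfold Rabs in Hx; destruct (Rcase_abs x); lra).
  assert (Ho : 0 <= out_ind dl b x) by (destruct (out_ind_01 dl b x) as [-> | ->]; lra).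
  destruct (Req_dec dl 0) as [->|Hd0].
  { rewrite Qsc_zero. simpl. assert (A = 0) by nra. subst A. assert (x = 0) by lra. subst x. nra. }
  unfold out_ind. destruct (Rlt_dec x (qlo dl b)) as [Hlo|Hlo].
  { unfold Qsc. destruct (Req_EM_T dl 0); [contradiction|].
    destruct (Rlt_dec x (qlo dl b)); [|contradiction]. simpl. unfold qlo in *. split; [|nra].
    assert (0 <= - 2 ^ (b - 1) * dl - x <= (1 - lam) * A) by nra. nra. }
  destruct (Rlt_dec (qhi dl b) x) as [Hhi|Hhi].
  { unfold Qsc. destruct (Req_EM_T dl 0); [contradiction|].
    destruct (Rlt_dec x (qlo dl b)); [contradiction|].
    destruct (Rlt_dec (qhi dl b) x); [|contradiction]. simpl. unfold qhi in *. split; [|nra].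
    assert (0 <= x - (2 ^ (b - 1) - 1) * dl <= (1 - lam) * A) by nra. nra. }
  destruct (Qsc_mid_moments dl b x ltac:(lra) Hlo Hhi) as [E1 E2]. rewrite E1. nra.
Qed.

Lemma Qsc_in_range dl b x : 0 <= dl -> qlo dl b <= x <= qhi dl b ->
  expect (Qsc dl b x) (fun q => q - x) = 0 /\
  expect (Qsc dl b x) (fun q => (q - x) ^ 2) <= dl ^ 2 / 4.
Proof.
  intros Hd Hx. destruct (Req_dec dl 0) as [->|Hd0].
  { rewrite Qsc_zero. unfold qlo, qhi in Hx. simpl. assert (x = 0) by lra. subst x. lra. }
  apply Qsc_mid_moments; lra.
Qed.

(** * The coordinatewise quantizer [Qvec] *)

Lemma Qvec_distr dl b x k : 0 <= dl -> is_distr (Qvec_aux dl b x k).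
Proof.
  intros Hd. induction k as [|k IH]; simpl; [apply is_distr_ret|].
  apply is_distr_bind; auto. intros y.
  apply is_distr_bind; [apply Qsc_distr; auto|]. intros; apply is_distr_ret.
Qed.

Lemma Qvec_marginal dl b x k j (F : R -> R) : 0 <= dl -> (j < k)%nat ->
  expect (Qvec_aux dl b x k) (fun q => F (q j)) = expect (Qsc dl b (x j)) F.
Proof.
  intros Hd. induction k as [|k IH]; intros Hj; [lia|]. simpl. rewrite expect_bind.
  destruct (Qsc_distr dl b (x k) Hd) as [_ Q1]. destruct (Qvec_distr dl b x k Hd) as [_ V1].
  destruct (Nat.eq_dec j k) as [->|Hjk].
  - rewrite (expect_ext _ _ (fun _ => expect (Qsc dl b (x k)) F)); [rewrite expect_const, V1; ring|].
    intros p a _. rewrite expect_bind. apply expect_ext. intros.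
    rewrite expect_ret, Nat.eqb_refl. auto.
  - rewrite (expect_ext _ _ (fun y => F (y j))); [apply IH; lia|].
    intros p a _. rewrite expect_bind, (expect_ext _ _ (fun _ => F (a j))); [rewrite expect_const, Q1; ring|].
    intros. rewrite expect_ret. apply Nat.eqb_neq in Hjk. rewrite Hjk. auto.
Qed.

Lemma Qvec_support dl b x k (P : nat -> R -> Prop) : 0 <= dl ->
  (forall j, (j < k)%nat -> almost_surely (Qsc dl b (x j)) (P j)) ->
  almost_surely (Qvec_aux dl b x k) (fun q => forall j, (j < k)%nat -> P j (q j)).
Proof.
  intros Hd. induction k as [|k IH]; intros HP; simpl.
  { apply as_ret. intros; lia. }
  apply as_bind_intro; [apply Qvec_distr; auto| |].
  { intros y. apply is_distr_bind; [apply Qsc_distr; auto|]. intros; apply is_distr_ret. }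
  apply (as_mono _ _ _ (IH (fun j Hj => HP j ltac:(lia)))). intros y Hy.
  apply as_bind_intro; [apply Qsc_distr; auto|intros; apply is_distr_ret|].
  apply (as_mono _ _ _ (HP k ltac:(lia))). intros z Hz. apply as_ret. intros j Hj.
  destruct (Nat.eq_dec j k) as [->|Hjk]; [rewrite Nat.eqb_refl; auto|].
  apply Nat.eqb_neq in Hjk as Hjk'. rewrite Hjk'. apply Hy. lia.
Qed.

(** * Independent quantization of several vectors ([Qlist]) *)

Section Qlist.
Variables (b d : nat).

Lemma Qlist_distr ds : forall us, (forall dl, In dl ds -> 0 <= dl) -> is_distr (Qlist b d ds us).
Proof.
  induction ds as [|dl ds IH]; intros [|u us] Hd; simpl; try apply is_distr_ret.
  apply is_distr_bind; [apply Qvec_distr; apply Hd; left; auto|]. intros q.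
  apply is_distr_bind; [apply IH; intros; apply Hd; right; auto|]. intros; apply is_distr_ret.
Qed.

Lemma Qlist_support (P : vec -> Prop) ds : forall us, (forall dl, In dl ds -> 0 <= dl) ->
  (forall dl u, In (dl, u) (combine ds us) -> almost_surely (Qvec dl b d u) P) ->
  almost_surely (Qlist b d ds us)
    (fun qs => length qs = Nat.min (length ds) (length us) /\ forall q, In q qs -> P q).
Proof.
  induction ds as [|dl ds IH]; intros [|u us] Hd HP; simpl;
    try (apply as_ret; split; [auto|intros _ []]).
  assert (Hd' : forall x, In x ds -> 0 <= x) by (intros; apply Hd; right; auto).
  apply as_bind_intro; [apply Qvec_distr, Hd; left; auto| |].
  { intros q. apply is_distr_bind; [apply Qlist_distr; auto|]. intros; apply is_distr_ret. }
  apply (as_mono _ _ _ (HP dl u (or_introl eq_refl))). intros q Hq.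
  apply as_bind_intro; [apply Qlist_distr; auto|intros; apply is_distr_ret|].
  apply (as_mono _ _ _ (IH us Hd' (fun dl' u' H => HP dl' u' (or_intror H)))).
  intros qs [Hl Hqs]. apply as_ret. simpl. split; [lia|]. intros q' [<-|H]; auto.
Qed.

Variable j : nat.

Definition coord_sum (qs : list vec) : R := fold_right (fun v acc => v j + acc) 0 qs.
Definition qbias (dl : R) (u : vec) : R := expect (Qvec dl b d u) (fun q => q j - u j).
Definition qsecond (dl : R) (u : vec) : R := expect (Qvec dl b d u) (fun q => (q j - u j) ^ 2).
Definition sum_pairs (F : R -> vec -> R) (ds : list R) (us : list vec) : R :=
  sumL (fun p => F (fst p) (snd p)) (combine ds us).

Lemma sum_pairs_cons F dl ds u us :
  sum_pairs F (dl :: ds) (u :: us) = F dl u + sum_pairs F ds us.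
Proof. reflexivity. Qed.

(* Independence: the errors add up, and so do their variances. *)
Lemma Qlist_moments ds : forall us, (forall dl, In dl ds -> 0 <= dl) -> length ds = length us ->
  expect (Qlist b d ds us) (fun qs => coord_sum qs - coord_sum us) = sum_pairs qbias ds us /\
  expect (Qlist b d ds us) (fun qs => (coord_sum qs - coord_sum us) ^ 2) =
    sum_pairs (fun dl u => qsecond dl u - qbias dl u ^ 2) ds us + (sum_pairs qbias ds us) ^ 2.
Proof.
  induction ds as [|dl ds IH]; intros [|u us] Hd Hl; simpl in Hl; try discriminate.
  { unfold sum_pairs, coord_sum; simpl. split; ring. }
  injection Hl as Hl.
  assert (Hd' : forall x, In x ds -> 0 <= x) by (intros; apply Hd; right; auto).
  destruct (IH us Hd' Hl) as (E1 & E2).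
  destruct (Qlist_distr ds us Hd') as [_ M].
  assert (V1 : mass (Qvec dl b d u) = 1) by (apply Qvec_distr, Hd; left; auto).
  simpl Qlist. fold (Qlist b d ds us). rewrite !sum_pairs_cons.
  set (SB := sum_pairs qbias ds us) in *.
  set (SV := sum_pairs (fun dl u => qsecond dl u - qbias dl u ^ 2) ds us) in *.
  rewrite !expect_bind. split.
  - rewrite (expect_ext _ _ (fun q : vec => (q j - u j) + SB)).
    + rewrite expect_plus, expect_const, V1. unfold qbias. ring.
    + intros p q _. rewrite expect_bind_ret.
      rewrite (expect_ext _ _ (fun qs => (q j - u j) + (coord_sum qs - coord_sum us)))
        by (intros; unfold coord_sum; simpl; ring).
      rewrite expect_plus, expect_const, M, E1. ring.
  - rewrite (expect_ext _ _ (fun q : vec => (q j - u j) ^ 2 + (2 * SB) * (q j - u j) + (SV + SB ^ 2))).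
    + rewrite !expect_plus, !expect_const, expect_scal, V1. unfold qsecond, qbias. ring.
    + intros p q _. rewrite expect_bind_ret.
      rewrite (expect_ext _ _ (fun qs => ((q j - u j) + (coord_sum qs - coord_sum us)) ^ 2))
        by (intros; unfold coord_sum; simpl; ring).
      rewrite expect_shift_sq, M, E1, E2. ring.
Qed.
End Qlist.

(** * Independent sampling *)

Fixpoint iid {A} (k : nat) (m : Defs.dist A) : Defs.dist (list A) :=
  match k with
  | O => dret []
  | S k' => dbind m (fun a => dbind (iid k' m) (fun l => dret (a :: l)))
  end.

Lemma sampleB_iid B n : sampleB B n = iid B (unif n).
Proof. induction B; simpl; auto. rewrite IHB; auto. Qed.
Lemma sample_workers_iid N B n : sample_workers N B n = iid N (sampleB B n).
Proof. induction N; simpl; auto. rewrite IHN; auto. Qed.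

Lemma iid_distr {A} k (m : Defs.dist A) : is_distr m -> is_distr (iid k m).
Proof.
  intros Hm. induction k as [|k IH]; simpl; [apply is_distr_ret|].
  apply is_distr_bind; auto. intros a. apply is_distr_bind; auto. intros; apply is_distr_ret.
Qed.

Lemma iid_support {A} k (m : Defs.dist A) (P : A -> Prop) : is_distr m -> almost_surely m P ->
  almost_surely (iid k m) (fun l => length l = k /\ forall a, In a l -> P a).
Proof.
  intros Hm HP. induction k as [|k IH]; simpl.
  { apply as_ret. split; [auto|intros _ []]. }
  apply as_bind_intro; auto.
  { intros a. apply is_distr_bind; [apply iid_distr; auto|intros; apply is_distr_ret]. }
  apply (as_mono _ _ _ HP). intros a Ha.
  apply as_bind_intro; [apply iid_distr; auto|intros; apply is_distr_ret|].
  apply (as_mono _ _ _ IH). intros l [Hl Hal]. apply as_ret. simpl.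
  split; [lia|]. intros a' [<-|H]; auto.
Qed.

Lemma iid_sum_moments {A} k (m : Defs.dist A) (X : A -> R) V : is_distr m ->
  expect m X = 0 -> expect m (fun a => X a ^ 2) = V ->
  expect (iid k m) (sumL X) = 0 /\ expect (iid k m) (fun l => sumL X l ^ 2) = INR k * V.
Proof.
  intros Hm E1 E2. induction k as [|k [IH1 IH2]]; simpl iid; [rewrite !expect_ret; simpl; split; ring|].
  destruct (iid_distr k m Hm) as [_ M']. rewrite !expect_bind. split.
  - rewrite (expect_ext _ _ X); auto. intros p a _. rewrite expect_bind_ret.
    rewrite (expect_ext _ _ (fun l => X a + sumL X l)) by reflexivity.
    rewrite expect_plus, expect_const, M', IH1; ring.
  - rewrite (expect_ext _ _ (fun a => X a ^ 2 + INR k * V)).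
    + rewrite expect_plus, expect_const, (proj2 Hm), E2, S_INR; ring.
    + intros p a _. rewrite expect_bind_ret.
      rewrite (expect_ext _ _ (fun l => (X a + sumL X l) ^ 2)) by reflexivity.
      rewrite expect_shift_sq, M', IH1, IH2; ring.
Qed.

Lemma expect_seq (c : R) s k (F : nat -> R) :
  expect (map (fun i => (c, i)) (seq s k)) F = c * sumR k (fun i => F (s + i)%nat).
Proof.
  revert s. induction k; intros s; [simpl; ring|].
  rewrite (sumR_shift k (fun i => F (s + i)%nat)). simpl. rewrite IHk, Nat.add_0_r.
  rewrite (sumR_ext k (fun i => F (S s + i)%nat) (fun i => F (s + S i)%nat)) by (intros; f_equal; lia).
  ring.
Qed.

Lemma expect_unif n F : expect (unif n) F = / INR n * sumR n F.
Proof. apply expect_seq. Qed.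

Lemma unif_distr n : (0 < n)%nat -> is_distr (unif n).
Proof.
  intros Hn. split.
  - intros p a Hin. apply in_map_iff in Hin as [i [E _]].
    inversion E. left. apply Rinv_0_lt_compat, lt_0_INR; auto.
  - unfold mass. rewrite expect_unif, sumR_const. field. apply not_0_INR; lia.
Qed.

Lemma unif_support n : almost_surely (unif n) (fun a => (a < n)%nat).
Proof.
  intros p a Hin _. apply in_map_iff in Hin as [i [E Hi]]. inversion E; subst.
  apply in_seq in Hi. lia.
Qed.

(** * Variance of the averaged minibatch gradient differences *)

Lemma INR_neq0 k : (0 < k)%nat -> INR k <> 0.
Proof. intros Hk. apply Rgt_not_eq, lt_0_INR, Hk. Qed.

Section Minibatch.
Variables (n N B d : nat) (g : nat -> vec -> vec) (x xt : vec).
Hypotheses (Hn : (0 < n)%nat) (HN : (0 < N)%nat) (HB : (0 < B)%nat).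

Definition gdiff (a j : nat) : R := g a x j - g a xt j.
Definition gdiff_mean (j : nat) : R := / INR n * sumR n (fun a => gdiff a j).
Definition gdiff_centred (j a : nat) : R := gdiff a j - gdiff_mean j.
Definition gdiff_var (j : nat) : R := / INR n * sumR n (fun a => gdiff_centred j a ^ 2).

Lemma gdiff_centred_moments j :
  expect (unif n) (gdiff_centred j) = 0 /\
  expect (unif n) (fun a => gdiff_centred j a ^ 2) = gdiff_var j.
Proof.
  rewrite !expect_unif. split; [|reflexivity].
  unfold gdiff_centred. rewrite (sumR_ext n _ (fun a => gdiff a j + (- gdiff_mean j))) by (intros; ring).
  rewrite sumR_plus, sumR_const. unfold gdiff_mean. field; repeat split; apply INR_neq0; assumption.
Qed.

Lemma sampleB_distr : is_distr (sampleB B n).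
Proof. rewrite sampleB_iid. apply iid_distr, unif_distr; auto. Qed.

Lemma workers_distr : is_distr (sample_workers N B n).
Proof. rewrite sample_workers_iid. apply iid_distr, sampleB_distr. Qed.

Lemma workers_support : almost_surely (sample_workers N B n)
  (fun Is => length Is = N /\ forall I, In I Is -> length I = B /\ forall a, In a I -> (a < n)%nat).
Proof.
  rewrite sample_workers_iid. apply iid_support; [apply sampleB_distr|].
  rewrite sampleB_iid. apply iid_support; [apply unif_distr; auto|apply unif_support].
Qed.

Lemma workers_sum_var j :
  expect (sample_workers N B n) (fun Is => sumL (sumL (gdiff_centred j)) Is ^ 2)
  = INR N * (INR B * gdiff_var j).
Proof.
  destruct (gdiff_centred_moments j) as [E1 E2].
  destruct (iid_sum_moments B _ _ _ (unif_distr n Hn) E1 E2) as [F1 F2].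
  rewrite <- sampleB_iid in F1, F2.
  rewrite sample_workers_iid. apply (iid_sum_moments N _ _ _ sampleB_distr F1 F2).
Qed.

Lemma avg_minibatch_eq j Is : length Is = N -> (forall I, In I Is -> length I = B) ->
  avg N (map (uvec B g x xt) Is) j - gdiff_mean j
  = / (INR N * INR B) * sumL (sumL (gdiff_centred j)) Is.
Proof.
  intros L1 L2. unfold avg. rewrite sumL_map.
  rewrite (sumL_ext _ (fun I => / INR B * sumL (gdiff_centred j) I + gdiff_mean j)).
  - rewrite sumL_plus, sumL_scal, sumL_const, L1. field; repeat split; apply INR_neq0; assumption.
  - intros I HI. unfold uvec.
    change (fold_right (fun a acc => g a x j - g a xt j + acc) 0 I) with (sumL (fun a => gdiff a j) I).
    rewrite (sumL_ext _ (fun a => gdiff_centred j a + gdiff_mean j)) by (intros; unfold gdiff_centred; ring).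
    rewrite sumL_plus, sumL_const, L2 by auto. field; repeat split; apply INR_neq0; assumption.
Qed.

Lemma avg_minibatch_var j :
  expect (sample_workers N B n) (fun Is => (avg N (map (uvec B g x xt) Is) j - gdiff_mean j) ^ 2)
  = / (INR N * INR B) * gdiff_var j.
Proof.
  rewrite (expect_ext_as _ _ (fun Is => (/ (INR N * INR B)) ^ 2 * sumL (sumL (gdiff_centred j)) Is ^ 2));
    [|apply workers_distr|].
  - rewrite expect_scal, workers_sum_var. field; repeat split; apply INR_neq0; assumption.
  - apply (as_mono _ _ _ workers_support). intros Is [L1 L2].
    rewrite avg_minibatch_eq; [ring|auto|intros; apply L2; auto].
Qed.

Lemma gradf_diff j : gradf n g x j - gradf n g xt j = gdiff_mean j.
Proof.
  unfold gradf, gdiff_mean, gdiff. rewrite <- Rmult_minus_distr_l. f_equal.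
  rewrite (sumR_ext n (fun a => g a x j - g a xt j) (fun a => g a x j + (-1) * g a xt j)) by (intros; ring).
  rewrite sumR_plus, sumR_scal. ring.
Qed.

Variable K : R.
Hypothesis HK : forall a, (a < n)%nat -> sqnorm d (vsub (g a x) (g a xt)) <= K.

(* The total variance is at most the mean squared difference, hence at most K. *)
Lemma gdiff_var_total : sumR d gdiff_var <= K.
Proof.
  apply Rle_trans with (sumR d (fun j => / INR n * sumR n (fun a => gdiff a j ^ 2))).
  - apply sumR_le. intros j _. unfold gdiff_var. apply Rmult_le_compat_l.
    + left; apply Rinv_0_lt_compat, lt_0_INR; auto.
    + unfold gdiff_centred.
      rewrite (sumR_ext n _ (fun a => gdiff a j ^ 2 + ((-2 * gdiff_mean j) * gdiff a j + gdiff_mean j ^ 2)))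
        by (intros; ring).
      rewrite !sumR_plus, sumR_scal, sumR_const.
      replace (sumR n (fun a => gdiff a j)) with (INR n * gdiff_mean j) by (unfold gdiff_mean; field; apply INR_neq0; assumption).
      assert (0 <= INR n * gdiff_mean j ^ 2) by (apply Rmult_le_pos; [apply pos_INR|apply pow2_ge_0]).
      nra.
  - rewrite sumR_scal, sumR_swap.
    apply Rle_trans with (/ INR n * sumR n (fun _ => K)).
    + apply Rmult_le_compat_l; [left; apply Rinv_0_lt_compat, lt_0_INR; auto|].
      apply sumR_le. intros a Ha. apply HK; auto.
    + rewrite sumR_const. right. field; repeat split; apply INR_neq0; assumption.
Qed.

Lemma minibatch_sqnorm_le I : length I = B -> (forall a, In a I -> (a < n)%nat) ->
  sqnorm d (uvec B g x xt I) <= K.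
Proof.
  intros L1 L2. unfold sqnorm.
  apply Rle_trans with (sumR d (fun j => / INR B * sumL (fun a => gdiff a j ^ 2) I)).
  - apply sumR_le. intros j _. unfold uvec.
    change (fold_right (fun a acc => g a x j - g a xt j + acc) 0 I) with (sumL (fun a => gdiff a j) I).
    pose proof (sumL_sq_le (fun a => gdiff a j) I) as C. rewrite L1 in C.
    assert (0 < INR B) by (apply lt_0_INR; auto).
    replace ((/ INR B * sumL (fun a => gdiff a j) I) ^ 2)
      with (/ INR B * (/ INR B * (sumL (fun a => gdiff a j) I) ^ 2)) by (field; apply INR_neq0; assumption).
    apply Rmult_le_compat_l; [left; apply Rinv_0_lt_compat; auto|].
    apply (Rmult_le_reg_l (INR B)); auto. rewrite <- Rmult_assoc, Rinv_r, Rmult_1_l; auto; lra.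
  - rewrite sumR_scal, sumR_sumL.
    apply Rle_trans with (/ INR B * sumL (fun _ => K) I).
    + apply Rmult_le_compat_l; [left; apply Rinv_0_lt_compat, lt_0_INR; auto|].
      apply sumL_le. intros a Ha. apply HK; auto.
    + rewrite sumL_const, L1. right. field; repeat split; apply INR_neq0; assumption.
Qed.
End Minibatch.

(** * Quantization error of the averaged message *)

Lemma infnorm_nonneg d u : 0 <= infnorm d u.
Proof. induction d; simpl; [lra|]. apply Rle_trans with (1 := IHd), Rmax_l. Qed.

Lemma infnorm_ge d u j : (j < d)%nat -> Rabs (u j) <= infnorm d u.
Proof.
  induction d; intros Hj; [lia|]. simpl.
  destruct (Nat.eq_dec j d) as [->|H]; [apply Rmax_r|].
  apply Rle_trans with (2 := Rmax_l _ _). apply IHd; lia.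
Qed.

Lemma infnorm_sq d u : infnorm d u ^ 2 <= sqnorm d u.
Proof.
  induction d; unfold sqnorm in *; simpl; [lra|].
  pose proof (infnorm_nonneg d u). pose proof (Rabs_pos (u d)).
  assert (Rabs (u d) ^ 2 = u d ^ 2) by (unfold Rabs; destruct (Rcase_abs (u d)); ring).
  unfold Rmax; destruct (Rle_dec _ _).
  - pose proof (pow2_ge_0 (infnorm d u)). simpl in *. nra.
  - pose proof (pow2_ge_0 (u d)). simpl in *. nra.
Qed.

Section Quantization.
Variables (b d N : nat) (lam dlam K : R).
Hypotheses (Hb : (2 <= b)%nat) (Hl : 0 < lam <= 1) (HN : (0 < N)%nat) (HK : 0 <= K).

(* Largest scale factor that can arise for a vector of squared norm at most K. *)
Definition dmax : R := lam * sqrt K / levels b.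

Lemma dmax_sq : dmax ^ 2 = lam ^ 2 * K / levels b ^ 2.
Proof.
  unfold dmax. pose proof (levels_ge1 b Hb). unfold Rdiv.
  rewrite !Rpow_mult_distr, pow2_sqrt, pow_inv by auto. ring.
Qed.

Lemma dmax_nonneg : 0 <= dmax.
Proof.
  unfold dmax. pose proof (levels_ge1 b Hb). pose proof (sqrt_pos K).
  unfold Rdiv. apply Rmult_le_pos; [nra|]. left; apply Rinv_0_lt_compat; lra.
Qed.

Definition well_scaled (dl : R) (u : vec) : Prop :=
  0 <= dl /\ lam * infnorm d u <= levels b * dl /\ dl <= dmax /\ sqnorm d u <= K /\
  INR (count_out dl b u d) <= dlam.

Lemma coord_error_moments j dl u : (j < d)%nat -> well_scaled dl u ->
  qbias b d j dl u ^ 2 <= out_ind dl b (u j) * (1 - lam) ^ 2 * K /\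
  qsecond b d j dl u - qbias b d j dl u ^ 2 <= dmax ^ 2 / 4.
Proof.
  intros Hj (H1 & H2 & H3 & H4 & H5). unfold qbias, qsecond, Qvec.
  rewrite (Qvec_marginal dl b u d j (fun y => y - u j)), (Qvec_marginal dl b u d j (fun y => (y - u j) ^ 2))
    by auto.
  destruct (Qsc_bias_variance dl b (u j) lam (infnorm d u) H1 Hb Hl H2 (infnorm_ge d u j Hj)) as [G1 G2].
  pose proof (infnorm_sq d u). pose proof (infnorm_nonneg d u).
  assert (0 <= out_ind dl b (u j)) by (destruct (out_ind_01 dl b (u j)) as [-> | ->]; lra).
  split.
  - apply Rle_trans with (1 := G1). apply Rmult_le_compat_l; [|lra].
    apply Rmult_le_pos; auto. apply pow2_ge_0.
  - apply Rle_trans with (1 := G2). assert (0 <= dmax ^ 2 - dl ^ 2) by nra. lra.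
Qed.

Section Workers.
Variables (ds : list R) (us : list vec).
Hypotheses (Lds : length ds = N) (Lus : length us = N)
  (Hds : forall dl, In dl ds -> 0 <= dl)
  (Hscaled : forall dl u, In (dl, u) (combine ds us) -> well_scaled dl u).

Let Lpairs : length (combine ds us) = N.
Proof. rewrite length_combine, Lds, Lus, Nat.min_id. auto. Qed.

Definition clipped (j : nat) : R := sum_pairs (fun dl u => out_ind dl b (u j)) ds us.

Lemma clipped_total : sumR d clipped <= INR N * dlam.
Proof.
  unfold clipped, sum_pairs. rewrite sumR_sumL, <- Lpairs, <- sumL_const.
  apply sumL_le. intros [dl u] Hin. simpl. rewrite <- count_out_sum. apply (Hscaled dl u Hin).
Qed.

(* Per coordinate: N rounding variances plus the squared sum of N clipping biases. *)
Lemma coord_sum_error j : (j < d)%nat ->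
  expect (Qlist b d ds us) (fun qs => (coord_sum j qs - coord_sum j us) ^ 2)
  <= INR N * (dmax ^ 2 / 4) + INR N * ((1 - lam) ^ 2 * K * clipped j).
Proof.
  intros Hj. destruct (Qlist_moments b d j ds us Hds (eq_trans Lds (eq_sym Lus))) as [_ E2]. rewrite E2.
  unfold clipped, sum_pairs. apply Rplus_le_compat.
  - apply Rle_trans with (sumL (fun _ => dmax ^ 2 / 4) (combine ds us)).
    + apply sumL_le. intros [dl u] Hin. apply (coord_error_moments j dl u Hj (Hscaled dl u Hin)).
    + rewrite sumL_const, Lpairs. lra.
  - apply Rle_trans with (1 := sumL_sq_le _ _). rewrite Lpairs.
    apply Rmult_le_compat_l; [apply pos_INR|].
    rewrite <- sumL_scal. apply sumL_le. intros [dl u] Hin. simpl.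
    destruct (coord_error_moments j dl u Hj (Hscaled dl u Hin)). lra.
Qed.

Lemma avg_quant_error :
  sumR d (fun j => expect (Qlist b d ds us) (fun qs => (avg N qs j - avg N us j) ^ 2))
  <= INR d * (dmax ^ 2 / 4) / INR N + dlam * (1 - lam) ^ 2 * K.
Proof.
  assert (0 < INR N) by (apply lt_0_INR; auto).
  apply Rle_trans with (sumR d (fun j => / INR N * (dmax ^ 2 / 4) + (1 - lam) ^ 2 * K / INR N * clipped j)).
  - apply sumR_le. intros j Hj.
    rewrite (expect_ext _ _ (fun qs => (/ INR N) ^ 2 * (coord_sum j qs - coord_sum j us) ^ 2))
      by (intros; unfold avg, coord_sum; ring).
    rewrite expect_scal. apply Rle_trans with ((/ INR N) ^ 2 * (INR N * (dmax ^ 2 / 4)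
        + INR N * ((1 - lam) ^ 2 * K * clipped j))).
    + apply Rmult_le_compat_l; [apply pow2_ge_0|apply coord_sum_error; auto].
    + right. field. lra.
  - rewrite sumR_plus, sumR_const, sumR_scal.
    assert (0 <= (1 - lam) ^ 2 * K / INR N) 
      by (apply Rmult_le_pos; [apply Rmult_le_pos; [apply pow2_ge_0|auto]|left; apply Rinv_0_lt_compat; lra]).
    pose proof clipped_total.
    assert ((1 - lam) ^ 2 * K / INR N * sumR d clipped <= (1 - lam) ^ 2 * K / INR N * (INR N * dlam))
      by (apply Rmult_le_compat_l; auto).
    replace ((1 - lam) ^ 2 * K / INR N * (INR N * dlam)) with (dlam * (1 - lam) ^ 2 * K) in * by (field; lra).
    unfold Rdiv at 1. lra.
Qed.
End Workers.

Lemma quant_error_ab ds us (G0 G1 : vec) : length ds = N -> length us = N ->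
  (forall dl, In dl ds -> 0 <= dl) ->
  (forall dl u, In (dl, u) (combine ds us) -> well_scaled dl u) ->
  expect (Qlist b d ds us) (fun qs => sqnorm d (vsub (vadd (avg N qs) G0) G1))
  <= 2 * (INR d * (dmax ^ 2 / 4) + dlam * (1 - lam) ^ 2 * K)
     + 2 * sumR d (fun j => (avg N us j - (G1 j - G0 j)) ^ 2).
Proof.
  intros Lds Lus Hds Hscaled. destruct (Qlist_distr b d ds us Hds) as [NN M].
  rewrite expect_sqnorm.
  apply Rle_trans with (sumR d (fun j => 2 * expect (Qlist b d ds us) (fun qs => (avg N qs j - avg N us j) ^ 2)
                                         + 2 * (avg N us j - (G1 j - G0 j)) ^ 2)).
  - apply sumR_le. intros j _. rewrite <- (Rmult_1_r (2 * (avg N us j - _) ^ 2)), <- M, <- expect_const.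
    rewrite <- expect_scal, <- expect_plus. apply expect_le_as; auto. intros p qs _ _.
    unfold vsub, vadd. replace (avg N qs j + G0 j - G1 j) with (avg N qs j - (G1 j - G0 j)) by ring.
    apply sq_split.
  - rewrite sumR_plus, !sumR_scal.
    pose proof (avg_quant_error ds us Lds Lus Hds Hscaled).
    assert (INR d * (dmax ^ 2 / 4) / INR N <= INR d * (dmax ^ 2 / 4))
      by (apply div_INR_le; auto; apply Rmult_le_pos; [apply pos_INR|nra]).
    lra.
Qed.

Lemma avg_in_range dt us : 0 <= dt -> length us = N ->
  almost_surely (Qlist b d (map (fun _ => dt) us) us)
    (fun qs => forall j, (j < d)%nat -> qlo dt b <= avg N qs j <= qhi dt b).
Proof.
  intros Hdt Lus.
  assert (Hds : forall dl, In dl (map (fun _ => dt) us) -> 0 <= dl)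
    by (intros dl Hdl; apply in_map_iff in Hdl as [? [<- _]]; auto).
  eapply as_mono.
  { apply (Qlist_support b d (fun q => forall j, (j < d)%nat -> qlo dt b <= q j <= qhi dt b) _ us Hds).
    intros dl u Hin. apply in_combine_l, in_map_iff in Hin as [? [<- _]].
    apply (Qvec_support dt b u d (fun _ q => qlo dt b <= q <= qhi dt b)); auto.
    intros j _. apply Qsc_support; auto. }
  intros qs [Lqs Hqs] j Hj. rewrite length_map, Lus, Nat.min_id in Lqs.
  assert (0 < INR N) by (apply lt_0_INR; auto).
  unfold avg. change (fold_right (fun v acc => v j + acc) 0 qs) with (sumL (fun q => q j) qs).
  assert (B1 : sumL (fun _ => qlo dt b) qs <= sumL (fun q => q j) qs)
    by (apply sumL_le; intros q Hq; apply Hqs; auto).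
  assert (B2 : sumL (fun q => q j) qs <= sumL (fun _ => qhi dt b) qs)
    by (apply sumL_le; intros q Hq; apply Hqs; auto).
  rewrite !sumL_const, Lqs in *.
  split; apply (Rmult_le_reg_l (INR N)); auto; rewrite <- Rmult_assoc, Rinv_r, Rmult_1_l; lra.
Qed.

Lemma requant_coord_error dt (y : vec) j c : 0 <= dt -> (j < d)%nat ->
  qlo dt b <= y j <= qhi dt b ->
  expect (Qvec dt b d y) (fun Q => (Q j - c) ^ 2) <= (y j - c) ^ 2 + dt ^ 2 / 4.
Proof.
  intros Hdt Hj Hy. unfold Qvec. rewrite (Qvec_marginal dt b y d j (fun q => (q - c) ^ 2)) by auto.
  rewrite (expect_ext _ _ (fun q => ((y j - c) + (q - y j)) ^ 2)) by (intros; f_equal; ring).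
  destruct (Qsc_in_range dt b (y j) Hdt Hy) as [E1 E2].
  rewrite expect_shift_sq, E1, (proj2 (Qsc_distr dt b (y j) Hdt)). lra.
Qed.

(* Scheme (c): the average is requantized with the common scale dt; its extra rounding
   variance is at most dmax^2/4 per coordinate, whence the constant 3/8. *)
Lemma quant_error_c dt us (G0 G1 : vec) : 0 <= dt <= dmax -> length us = N ->
  (forall dl u, In (dl, u) (combine (map (fun _ => dt) us) us) -> well_scaled dl u) ->
  expect (Qlist b d (map (fun _ => dt) us) us)
    (fun qs => expect (Qvec dt b d (avg N qs)) (fun w => sqnorm d (vsub (vadd w G0) G1)))
  <= 2 * (INR d * (3 * dmax ^ 2 / 8) + dlam * (1 - lam) ^ 2 * K)
     + 2 * sumR d (fun j => (avg N us j - (G1 j - G0 j)) ^ 2).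
Proof.
  intros Hdt Lus Hscaled. set (ds := map (fun _ => dt) us) in *.
  assert (Lds : length ds = N) by (unfold ds; rewrite length_map; auto).
  assert (Hds : forall dl, In dl ds -> 0 <= dl)
    by (intros dl Hdl; apply in_map_iff in Hdl as [? [<- _]]; lra).
  destruct (Qlist_distr b d ds us Hds) as [NN M].
  set (r j := (avg N us j - (G1 j - G0 j)) ^ 2).
  apply Rle_trans with (expect (Qlist b d ds us) (fun qs => sumR d (fun j =>
    2 * (avg N qs j - avg N us j) ^ 2 + (2 * r j + dmax ^ 2 / 4)))).
  - apply expect_le_as; auto. apply (as_mono _ _ _ (avg_in_range dt us (proj1 Hdt) Lus)).
    intros qs Hrange. rewrite expect_sqnorm. apply sumR_le. intros j Hj.
    unfold vsub, vadd. rewrite (expect_ext _ _ (fun w : vec => (w j - (G1 j - G0 j)) ^ 2))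
      by (intros; f_equal; ring).
    eapply Rle_trans; [apply requant_coord_error; auto; lra|].
    pose proof (sq_split (avg N qs j) (avg N us j) (G1 j - G0 j)).
    assert (dt ^ 2 <= dmax ^ 2) by nra. unfold r. lra.
  - rewrite (expect_sumR _ d (fun j qs => 2 * (avg N qs j - avg N us j) ^ 2 + (2 * r j + dmax ^ 2 / 4))).
    rewrite (sumR_ext d _ (fun j => 2 * expect (Qlist b d ds us) (fun qs => (avg N qs j - avg N us j) ^ 2)
                                   + (2 * r j + dmax ^ 2 / 4)))
      by (intros; rewrite expect_plus, expect_scal, expect_const, M; ring).
    rewrite !sumR_plus, sumR_scal, sumR_scal, sumR_const.
    pose proof (avg_quant_error ds us Lds Lus Hds Hscaled).
    assert (INR d * (dmax ^ 2 / 4) / INR N <= INR d * (dmax ^ 2 / 4))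
      by (apply div_INR_le; auto; apply Rmult_le_pos; [apply pos_INR|nra]).
    lra.
Qed.
End Quantization.

(** * One inner iteration of LPC-SVRG *)

Lemma In_combine_map {A C} (f : C -> A) (l : list C) x y :
  In (x, y) (combine (map f l) l) -> x = f y.
Proof. induction l; simpl; [tauto|]. intros [E|H]; [inversion E; auto|auto]. Qed.

Lemma fold_Rmax_ge l a : In a l -> a <= fold_right Rmax 0 l.
Proof.
  induction l; simpl; [tauto|]. intros [->|H]; [apply Rmax_l|].
  apply Rle_trans with (2 := Rmax_r _ _); auto.
Qed.
Lemma fold_Rmax_nonneg l : 0 <= fold_right Rmax 0 l.
Proof. induction l; simpl; [lra|]. apply Rle_trans with (2 := Rmax_r _ _); auto. Qed.
Lemma fold_Rmax_le l c : 0 <= c -> (forall a, In a l -> a <= c) -> fold_right Rmax 0 l <= c.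
Proof.
  intros Hc. induction l; simpl; intros H; auto.
  apply Rmax_lub; [apply H; auto|apply IHl; intros; apply H; auto].
Qed.

Lemma scale_nonneg b lam d u : (2 <= b)%nat -> 0 < lam -> 0 <= scale b lam d u.
Proof.
  intros Hb Hl. pose proof (levels_ge1 b Hb). pose proof (infnorm_nonneg d u).
  unfold scale. fold (levels b). unfold Rdiv. apply Rmult_le_pos; [nra|].
  left; apply Rinv_0_lt_compat; lra.
Qed.

Lemma step_distr sc n N B b d lam g x xt : (0 < n)%nat -> (2 <= b)%nat -> 0 < lam ->
  is_distr (step sc n N B b d lam g x xt).
Proof.
  intros Hn Hb Hl. unfold step. apply is_distr_bind; [apply workers_distr; auto|].
  intros Is. cbv zeta.
  set (dt := fold_right Rmax 0 (map (scale b lam d) (map (uvec B g x xt) Is))).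
  assert (Hdt : 0 <= dt) by apply fold_Rmax_nonneg.
  assert (Hconst : forall dl, In dl (map (fun _ : vec => dt) (map (uvec B g x xt) Is)) -> 0 <= dl)
    by (intros dl Hdl; apply in_map_iff in Hdl as [u [<- _]]; auto).
  destruct sc; (apply is_distr_bind; [apply Qlist_distr|]).
  - intros dl Hdl. apply in_map_iff in Hdl as [u [<- _]]. apply scale_nonneg; auto.
  - intros; apply is_distr_ret.
  - exact Hconst.
  - intros; apply is_distr_ret.
  - exact Hconst.
  - intros qs. apply is_distr_bind; [apply Qvec_distr; auto|intros; apply is_distr_ret].
Qed.

Section Step.
Variables (n N B b d : nat) (lam dlam K : R) (g : nat -> vec -> vec) (x xt : vec).
Hypotheses (Hn : (0 < n)%nat) (HN : (0 < N)%nat) (HB : (0 < B)%nat) (Hb : (2 <= b)%nat)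
  (Hl : 0 < lam <= 1) (HK0 : 0 <= K)
  (HK : forall a, (a < n)%nat -> sqnorm d (vsub (g a x) (g a xt)) <= K).

Let us_of (Is : list (list nat)) : list vec := map (uvec B g x xt) Is.

Lemma messages_bounded : almost_surely (sample_workers N B n)
  (fun Is => length (us_of Is) = N /\ forall u, In u (us_of Is) -> sqnorm d u <= K).
Proof.
  apply (as_mono _ _ _ (workers_support n N B Hn)). intros Is [L1 L2].
  unfold us_of. rewrite length_map. split; auto.
  intros u Hu. apply in_map_iff in Hu as [I [<- HI]]. destruct (L2 I HI).
  apply (minibatch_sqnorm_le n B d g x xt HB K HK); auto.
Qed.

(* Reduction to the quantization error: the sampling part contributes K / (N B). *)
Lemma step_error_bound Q (cont : list (list nat) -> R) :
  almost_surely (sample_workers N B n) (fun Is =>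
     cont Is <= 2 * Q + 2 * sumR d (fun j => (avg N (us_of Is) j
                                      - (gradf n g x j - gradf n g xt j)) ^ 2)) ->
  expect (sample_workers N B n) cont <= 2 * Q + 2 * / (INR N * INR B) * K.
Proof.
  intros H. destruct (workers_distr n N B Hn) as [NN M].
  eapply Rle_trans; [apply expect_le_as; [exact NN|exact H]|].
  rewrite expect_plus, expect_const, M, expect_scal.
  rewrite (expect_sumR _ d (fun j Is => (avg N (us_of Is) j - (gradf n g x j - gradf n g xt j)) ^ 2)).
  rewrite (sumR_ext d _ (fun j => / (INR N * INR B) * gdiff_var n g x xt j)).
  - rewrite sumR_scal. pose proof (gdiff_var_total n d g x xt Hn K HK).
    assert (0 < / (INR N * INR B)) by (apply Rinv_0_lt_compat, Rmult_lt_0_compat; apply lt_0_INR; auto).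
    assert (/ (INR N * INR B) * sumR d (gdiff_var n g x xt) <= / (INR N * INR B) * K)
      by (apply Rmult_le_compat_l; lra).
    lra.
  - intros j _. rewrite <- (avg_minibatch_var n N B g x xt Hn HN HB j).
    apply expect_ext. intros. rewrite gradf_diff. reflexivity.
Qed.

(* The hypothesis of the theorem on one outcome: at most dlam clipped coordinates per worker. *)
Definition counts_ok (o : StepOut) : Prop := forall i, (i < N)%nat ->
  INR (count_out (nth i (so_ds o) 0) b (nth i (so_us o) vzero) d) <= dlam.

Lemma counts_from_outcomes (m : Defs.dist StepOut) us ds :
  almost_surely m counts_ok -> is_distr m -> length us = N -> length ds = N ->
  almost_surely m (fun o => so_us o = us /\ so_ds o = ds) ->
  forall dl u, In (dl, u) (combine ds us) -> INR (count_out dl b u d) <= dlam.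
Proof.
  intros Hc Hm L1 L2 Hf dl u Hin.
  destruct (as_witness m _ Hm (as_and _ _ _ Hf Hc)) as (o & [E1 E2] & Ho).
  apply (In_nth _ _ (0, vzero)) in Hin as [i [Hi E]].
  rewrite length_combine in Hi. rewrite combine_nth in E by lia. injection E as <- <-.
  specialize (Ho i ltac:(lia)). rewrite E1, E2 in Ho. exact Ho.
Qed.

Lemma scale_bounds u : sqnorm d u <= K ->
  0 <= scale b lam d u /\ lam * infnorm d u <= levels b * scale b lam d u /\
  scale b lam d u <= dmax b lam K.
Proof.
  intros Hu. pose proof (levels_ge1 b Hb). pose proof (infnorm_nonneg d u).
  assert (Hi : infnorm d u <= sqrt K).
  { rewrite <- (sqrt_pow2 (infnorm d u)) by auto. apply sqrt_le_1_alt. pose proof (infnorm_sq d u). lra. }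
  unfold scale, dmax. fold (levels b). split; [|split].
  - apply scale_nonneg; [exact Hb|lra].
  - right. field. lra.
  - unfold Rdiv. apply Rmult_le_compat_r; [left; apply Rinv_0_lt_compat; lra|]. nra.
Qed.

Lemma own_scales_well_scaled us : (forall u, In u us -> sqnorm d u <= K) ->
  (forall dl u, In (dl, u) (combine (map (scale b lam d) us) us) -> INR (count_out dl b u d) <= dlam) ->
  forall dl u, In (dl, u) (combine (map (scale b lam d) us) us) -> well_scaled b d lam dlam K dl u.
Proof.
  intros Hus Hc dl u Hin. pose proof (In_combine_map _ _ _ _ Hin) as ->.
  destruct (scale_bounds u (Hus u (in_combine_r _ _ _ _ Hin))) as (S1 & S2 & S3).
  repeat split; auto. apply Hus. eapply in_combine_r; eauto.
Qed.

Lemma common_scale_well_scaled us : (forall u, In u us -> sqnorm d u <= K) ->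
  let dt := fold_right Rmax 0 (map (scale b lam d) us) in
  (forall dl u, In (dl, u) (combine (map (fun _ => dt) us) us) -> INR (count_out dl b u d) <= dlam) ->
  0 <= dt <= dmax b lam K /\
  forall dl u, In (dl, u) (combine (map (fun _ => dt) us) us) -> well_scaled b d lam dlam K dl u.
Proof.
  intros Hus dt Hc.
  assert (Hdt : 0 <= dt <= dmax b lam K).
  { split; [apply fold_Rmax_nonneg|]. apply fold_Rmax_le; [apply dmax_nonneg; auto|].
    intros a Ha. apply in_map_iff in Ha as [u [<- Hu]]. apply (scale_bounds u (Hus u Hu)). }
  split; auto. intros dl u Hin. assert (Hu : In u us) by (eapply in_combine_r; eauto).
  pose proof (In_combine_map _ _ _ _ Hin) as ->.
  destruct (scale_bounds u (Hus u Hu)) as (S1 & S2 & S3).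
  assert (scale b lam d u <= dt) by (apply fold_Rmax_ge, in_map; auto).
  pose proof (levels_ge1 b Hb).
  assert (levels b * scale b lam d u <= levels b * dt) by (apply Rmult_le_compat_l; lra).
  repeat split; auto; lra.
Qed.

Definition step_error (sc : scheme) : R :=
  expect (step sc n N B b d lam g x xt) (fun o => sqnorm d (vsub (so_v o) (gradf n g x))).

Lemma step_error_A : almost_surely (step SchA n N B b d lam g x xt) counts_ok ->
  step_error SchA
  <= 2 * (INR d * (dmax b lam K ^ 2 / 4) + dlam * (1 - lam) ^ 2 * K) + 2 * / (INR N * INR B) * K.
Proof.
  unfold step_error, step. intros AS. rewrite expect_bind. apply step_error_bound.
  apply as_bind_elim in AS. apply (as_mono _ _ _ (as_and _ _ _ AS messages_bounded)).
  intros Is [ASIs [Lus Hus]]. cbv beta zeta iota in ASIs |- *. unfold us_of in *.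
  set (us := map (uvec B g x xt) Is) in *. set (ds := map (scale b lam d) us) in *.
  assert (Hds : forall dl, In dl ds -> 0 <= dl)
    by (intros dl Hdl; apply in_map_iff in Hdl as [u [<- _]]; apply scale_nonneg; [exact Hb|lra]).
  assert (Lds : length ds = N) by (unfold ds; rewrite length_map; auto).
  assert (Hc : forall dl u, In (dl, u) (combine ds us) -> INR (count_out dl b u d) <= dlam).
  { apply (counts_from_outcomes _ us ds ASIs); auto.
    - apply is_distr_bind; [apply Qlist_distr; auto|intros; apply is_distr_ret].
    - apply as_bind_all; [apply Qlist_distr; auto|intros; apply is_distr_ret|].
      intros; apply as_ret; auto. }
  rewrite expect_bind_ret. apply quant_error_ab; auto. apply own_scales_well_scaled; auto.
Qed.

Lemma step_error_B : almost_surely (step SchB n N B b d lam g x xt) counts_ok ->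
  step_error SchB
  <= 2 * (INR d * (dmax b lam K ^ 2 / 4) + dlam * (1 - lam) ^ 2 * K) + 2 * / (INR N * INR B) * K.
Proof.
  unfold step_error, step. intros AS. rewrite expect_bind. apply step_error_bound.
  apply as_bind_elim in AS. apply (as_mono _ _ _ (as_and _ _ _ AS messages_bounded)).
  intros Is [ASIs [Lus Hus]]. cbv beta zeta iota in ASIs |- *. unfold us_of in *.
  set (us := map (uvec B g x xt) Is) in *.
  set (dt := fold_right Rmax 0 (map (scale b lam d) us)) in *. set (ds := map (fun _ => dt) us) in *.
  assert (Hds : forall dl, In dl ds -> 0 <= dl)
    by (intros dl Hdl; apply in_map_iff in Hdl as [u [<- _]]; apply fold_Rmax_nonneg).
  assert (Lds : length ds = N) by (unfold ds; rewrite length_map; auto).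
  assert (Hc : forall dl u, In (dl, u) (combine ds us) -> INR (count_out dl b u d) <= dlam).
  { apply (counts_from_outcomes _ us ds ASIs); auto.
    - apply is_distr_bind; [apply Qlist_distr; auto|intros; apply is_distr_ret].
    - apply as_bind_all; [apply Qlist_distr; auto|intros; apply is_distr_ret|].
      intros; apply as_ret; auto. }
  rewrite expect_bind_ret. apply quant_error_ab; auto. apply (common_scale_well_scaled us Hus Hc).
Qed.

Lemma step_error_C : almost_surely (step SchC n N B b d lam g x xt) counts_ok ->
  step_error SchC
  <= 2 * (INR d * (3 * dmax b lam K ^ 2 / 8) + dlam * (1 - lam) ^ 2 * K) + 2 * / (INR N * INR B) * K.
Proof.
  unfold step_error, step. intros AS. rewrite expect_bind. apply step_error_bound.
  apply as_bind_elim in AS. apply (as_mono _ _ _ (as_and _ _ _ AS messages_bounded)).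
  intros Is [ASIs [Lus Hus]]. cbv beta zeta iota in ASIs |- *. unfold us_of in *.
  set (us := map (uvec B g x xt) Is) in *.
  set (dt := fold_right Rmax 0 (map (scale b lam d) us)) in *. set (ds := map (fun _ => dt) us) in *.
  assert (Hdt : 0 <= dt) by apply fold_Rmax_nonneg.
  assert (Hds : forall dl, In dl ds -> 0 <= dl)
    by (intros dl Hdl; apply in_map_iff in Hdl as [u [<- _]]; auto).
  assert (Lds : length ds = N) by (unfold ds; rewrite length_map; auto).
  assert (Hrequant : forall qs, is_distr (dbind (Qvec dt b d (avg N qs))
            (fun w => dret (mkStepOut us ds (vadd w (gradf n g xt))))))
    by (intros; apply is_distr_bind; [apply Qvec_distr; auto|intros; apply is_distr_ret]).
  assert (Hc : forall dl u, In (dl, u) (combine ds us) -> INR (count_out dl b u d) <= dlam).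
  { apply (counts_from_outcomes _ us ds ASIs); auto.
    - apply is_distr_bind; [apply Qlist_distr; auto|auto].
    - apply as_bind_all; [apply Qlist_distr; auto|auto|]. intros qs.
      apply as_bind_all; [apply Qvec_distr; auto|intros; apply is_distr_ret|].
      intros; apply as_ret; auto. }
  destruct (common_scale_well_scaled us Hus Hc) as [Hdt' Hscaled].
  rewrite expect_bind. rewrite (expect_ext _ _ (fun qs => expect (Qvec dt b d (avg N qs))
    (fun w => sqnorm d (vsub (vadd w (gradf n g xt)) (gradf n g x))))) by (intros; rewrite expect_bind_ret; reflexivity).
  apply quant_error_c; auto.
Qed.
End Step.

Definition quant_const (sc : scheme) : R := match sc with SchC => 3 / 8 | _ => 1 / 4 end.

Lemma step_error_le sc n N B b d lam dlam K g x xt :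
  (0 < n)%nat -> (0 < N)%nat -> (0 < B)%nat -> (2 <= b)%nat -> 0 < lam <= 1 -> 0 <= K ->
  (forall a, (a < n)%nat -> sqnorm d (vsub (g a x) (g a xt)) <= K) ->
  almost_surely (step sc n N B b d lam g x xt) (counts_ok N b d dlam) ->
  step_error n N B b d lam g x xt sc
  <= 2 * (INR d * (quant_const sc * dmax b lam K ^ 2) + dlam * (1 - lam) ^ 2 * K)
     + 2 * / (INR N * INR B) * K.
Proof.
  intros. destruct sc; simpl quant_const.
  - replace (1 / 4 * dmax b lam K ^ 2) with (dmax b lam K ^ 2 / 4) by field. apply step_error_A; auto.
  - replace (1 / 4 * dmax b lam K ^ 2) with (dmax b lam K ^ 2 / 4) by field. apply step_error_B; auto.
  - replace (3 / 8 * dmax b lam K ^ 2) with (3 * dmax b lam K ^ 2 / 8) by field. apply step_error_C; auto.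
Qed.

(** * From one step to the whole history *)

Lemma inner_loop_distr sc n N B b d lam eta g prox k x xt : (0 < n)%nat -> (2 <= b)%nat -> 0 < lam ->
  is_distr (inner_loop sc n N B b d lam eta g prox k x xt).
Proof.
  intros Hn Hb Hl. induction k; simpl; [apply is_distr_ret|].
  apply is_distr_bind; auto. intros. apply is_distr_bind; [apply step_distr; auto|intros; apply is_distr_ret].
Qed.

Lemma history_distr sc n N B b d m lam eta g prox s t x0 : (0 < n)%nat -> (2 <= b)%nat -> 0 < lam ->
  is_distr (history sc n N B b d m lam eta g prox s t x0).
Proof.
  intros Hn Hb Hl. unfold history. apply is_distr_bind.
  - induction s; simpl; [apply is_distr_ret|]. apply is_distr_bind; auto. intros; apply inner_loop_distr; auto.
  - intros. apply is_distr_bind; [apply inner_loop_distr; auto|intros; apply is_distr_ret].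
Qed.

Lemma joint_error_le sc n N B b d m lam eta g prox s t x0 (P : StepOut -> Prop) C :
  (0 < n)%nat -> (2 <= b)%nat -> 0 < lam ->
  almost_surely (joint sc n N B b d m lam eta g prox s t x0) (fun w => P (snd w)) ->
  (forall x xt, almost_surely (step sc n N B b d lam g x xt) P ->
     step_error n N B b d lam g x xt sc <= C * sqnorm d (vsub x xt)) ->
  expect (joint sc n N B b d m lam eta g prox s t x0)
    (fun w => sqnorm d (vsub (so_v (snd w)) (gradf n g (fst (fst w)))))
  <= C * expect (history sc n N B b d m lam eta g prox s t x0) (fun p => sqnorm d (vsub (fst p) (snd p))).
Proof.
  intros Hn Hb Hl AS Hstep. unfold joint in *. rewrite expect_bind, <- expect_scal.
  apply expect_le_as; [apply history_distr; auto|]. apply as_bind_elim in AS.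
  apply (as_mono _ _ _ AS). intros [x xt] Hx. simpl in *. rewrite expect_bind_ret. apply Hstep.
  apply as_bind_elim in Hx. apply (as_mono _ _ _ Hx). intros o Ho. apply (as_ret_inv _ _ Ho).
Qed.

Lemma lipschitz_sq d L (a c : vec) : norm d a <= L * norm d c -> sqnorm d a <= L ^ 2 * sqnorm d c.
Proof.
  unfold norm. intros H. pose proof (sqnorm_nonneg d a). pose proof (sqnorm_nonneg d c).
  pose proof (sqrt_pos (sqnorm d a)). pose proof (sqrt_pos (sqnorm d c)).
  rewrite <- (pow2_sqrt (sqnorm d a)), <- (pow2_sqrt (sqnorm d c)) by auto. nra.
Qed.

Theorem lemma2 (n d N B S m b : nat) (L eta lam dlam : R)
  (f : nat -> vec -> R) (g : nat -> vec -> vec) (h : vec -> option R)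
  (prox : vec -> vec) (x0 : vec) (sc : scheme) (s t : nat) :
  (0 < n)%nat -> (0 < N)%nat -> (0 < B)%nat -> (2 <= b)%nat ->
  0 < eta -> 0 < lam <= 1 -> (s < S)%nat -> (t < m)%nat ->
  (forall i, (i < n)%nat -> has_gradient d (f i) (g i)) ->
  (forall i, (i < n)%nat -> forall x y, norm d (vsub (g i x) (g i y)) <= L * norm d (vsub x y)) ->
  proper h -> convex_ext h -> lsc d h -> is_prox d eta h prox ->
  0 <= dlam ->
  almost_surely (joint sc n N B b d m lam eta g prox s t x0)
    (fun w => forall i, (i < N)%nat ->
       INR (count_out (nth i (so_ds (snd w)) 0) b (nth i (so_us (snd w)) vzero) d) <= dlam) ->
  ((sc = SchA \/ sc = SchB) ->
     expect (joint sc n N B b d m lam eta g prox s t x0)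
       (fun w => sqnorm d (vsub (so_v (snd w)) (gradf n g (fst (fst w)))))
     <= 2 * L ^ 2 * (INR d * lam ^ 2 / (4 * (2 ^ (b - 1)%nat - 1) ^ 2)
                     + dlam * (1 - lam) ^ 2 + / (INR N * INR B))
        * expect (history sc n N B b d m lam eta g prox s t x0)
            (fun p => sqnorm d (vsub (fst p) (snd p)))) /\
  (sc = SchC ->
     expect (joint sc n N B b d m lam eta g prox s t x0)
       (fun w => sqnorm d (vsub (so_v (snd w)) (gradf n g (fst (fst w)))))
     <= 2 * L ^ 2 * (3 * INR d * lam ^ 2 / (8 * (2 ^ (b - 1)%nat - 1) ^ 2)
                     + dlam * (1 - lam) ^ 2 + / (INR N * INR B))
        * expect (history sc n N B b d m lam eta g prox s t x0)
            (fun p => sqnorm d (vsub (fst p) (snd p)))).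
Proof.
  intros Hn HN HB Hb _ Hl _ _ _ Hlip _ _ _ _ _ AS.
  pose proof (levels_ge1 b Hb) as Hlev.
  assert (INR N <> 0 /\ INR B <> 0) as [HN0 HB0] by (split; apply INR_neq0; auto).
  (* Conditionally on (x, xt), the Lipschitz bound gives K = L^2 ||x - xt||^2. *)
  assert (Hjoint : expect (joint sc n N B b d m lam eta g prox s t x0)
       (fun w => sqnorm d (vsub (so_v (snd w)) (gradf n g (fst (fst w)))))
     <= 2 * L ^ 2 * (INR d * quant_const sc * lam ^ 2 / levels b ^ 2
                     + dlam * (1 - lam) ^ 2 + / (INR N * INR B))
        * expect (history sc n N B b d m lam eta g prox s t x0)
            (fun p => sqnorm d (vsub (fst p) (snd p)))).
  { apply (joint_error_le _ _ _ _ _ _ _ _ _ _ _ _ _ _ (counts_ok N b d dlam)); auto; [lra|].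
    intros x xt ASx. set (K := L ^ 2 * sqnorm d (vsub x xt)).
    assert (0 <= K) by (apply Rmult_le_pos; [apply pow2_ge_0|apply sqnorm_nonneg]).
    eapply Rle_trans; [apply (step_error_le _ _ _ _ _ _ _ dlam K); auto|].
    - intros a Ha. apply lipschitz_sq, Hlip; auto.
    - right. rewrite dmax_sq by auto. unfold K. field. repeat split; auto; lra. }
  unfold levels in Hjoint, Hlev.
  split; [intros [-> | ->]|intros ->]; eapply Rle_trans; try exact Hjoint;
    right; simpl quant_const; field; repeat split; auto; lra.
Qed.
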